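(* For $n\le 7$, the independent locus $U_n$ equals all of $\mathcal{M}_{5,n}\setminus\mathcal{M}_{5,n}^3$.
   Context: Work over an algebraically closed field of characteristic not $2,3,5$. $\mathcal{M}_{5,n}$ is the moduli stack of smooth genus $5$ curves with $n$ distinct ordered marked points, and $\mathcal{M}_{5,n}^k$ is the closed locus of curves of gonality $\le k$. Points of $\mathcal{M}_{5,n}\setminus\mathcal{M}_{5,n}^3$ are curves whose canonical embedding in $\mathbb{P}^4$ is a complete intersection of three quadrics. $U_n$ is the open substack of $\mathcal{M}_{5,n}\setminus\mathcal{M}_{5,n}^3$ where the $n$ marked points, in the canonical embedding $C\subset\mathbb{P}^4$, impose independent conditions on quadrics, i.e. $H^0(\mathbb{P}^4,\mathcal{O}(2))\to\bigoplus_{i=1}^n\mathcal{O}(2)|_{p_i}$ is surjective. *)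

From HB Require Import structures.
From mathcomp Require Import all_boot all_order all_algebra.
From mathcomp Require Import mpoly.
Set Implicit Arguments. Unset Strict Implicit. Unset Printing Implicit Defensive.
Import GRing.Theory.
Local Open Scope ring_scope.

(* Homogeneous coordinates on P^4 over K: vectors 'I_5 -> K. *)
Definition nonzero_vec (K : fieldType) (x : 'I_5 -> K) : Prop := exists j, x j != 0.

Definition proj_eq (K : fieldType) (x y : 'I_5 -> K) : Prop :=
  exists a : K, forall j, x j = a * y j.

Definition on_CI (K : fieldType) (Q : 'I_3 -> {mpoly K[5]}) (x : 'I_5 -> K) : Prop :=
  nonzero_vec x /\ forall k, (Q k).@[x] = 0.

Definition jacobian (K : fieldType) (Q : 'I_3 -> {mpoly K[5]}) (x : 'I_5 -> K)
  : 'M[K]_(3, 5) := \matrix_(k < 3, j < 5) (mderiv j (Q k)).@[x].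

(* Over an
   algebraically closed field these are exactly the canonical models of smooth
   non-trigonal genus 5 curves. *)
Definition smooth_CI_of_quadrics (K : fieldType) (Q : 'I_3 -> {mpoly K[5]}) : Prop :=
  (forall k, Q k \is 2.-homog) /\
  (forall x, on_CI Q x -> \rank (jacobian Q x) = 3%N).

(* The points impose independent conditions on quadrics:
   H^0(P^4, O(2)) -> (+)_i O(2)|_{p_i} is surjective. *)
Definition independent_on_quadrics (K : fieldType) (n : nat) (p : 'I_n -> 'I_5 -> K)
  : Prop :=
  forall c : 'I_n -> K, exists q : {mpoly K[5]},
    q \is 2.-homog /\ forall i, q.@[p i] = c i.

From HB Require Import structures.
From mathcomp Require Import all_boot all_order all_algebra.
From mathcomp Require Import mpoly.
From mathcomp Require Import ring.
Set Implicit Arguments. Unset Strict Implicit. Unset Printing Implicit Defensive.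
Import GRing.Theory.
Local Open Scope ring_scope.

(* Write Q_k(x) = x A_k x^T.  For each marked point p_i we find two
   hyperplanes whose union contains every other marked point but not p_i;
   their product is a quadric separating p_i, and these quadrics interpolate
   arbitrary values.  The at most six other points are split into two triples
   whose spans miss p_i, which is possible because no three marked points are
   collinear and no five are coplanar.  Both facts come from smoothness: a
   line, resp. the conic through five coplanar points, would lie on every Q_k,
   and the Jacobian minor transverse to it has a determinant that is a binary
   form in the parameter of the curve.  Over an algebraically closed field
   this form has a zero, where the Jacobian drops rank. *)

Section QuadraticForm.
Variables (K : fieldType) (n : nat).
Implicit Types (A : 'M[K]_n) (x y z : 'rV[K]_n).

Definition qform A x := (x *m A *m x^T) 0 0.
Definition bform A x y := (x *m (A + A^T) *m y^T) 0 0.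

Lemma trmx_polar A : (A + A^T)^T = A + A^T.
Proof. by rewrite linearD /= trmxK addrC. Qed.

Lemma addmx11E (M N : 'M[K]_1) : (M + N) 0 0 = M 0 0 + N 0 0.
Proof. exact: mxE. Qed.

Lemma bilin_trmx A x y : (x *m A^T *m y^T) 0 0 = (y *m A *m x^T) 0 0.
Proof.
have -> : y *m A *m x^T = (x *m A^T *m y^T)^T by rewrite !trmx_mul !trmxK mulmxA.
by rewrite [RHS]mxE.
Qed.

Lemma bformC A x y : bform A x y = bform A y x.
Proof.
rewrite /bform; have -> : x *m (A + A^T) *m y^T = (y *m (A + A^T) *m x^T)^T.
  by rewrite !trmx_mul trmxK trmx_polar mulmxA.
by rewrite mxE.
Qed.

Lemma bformDl A x y z : bform A (x + y) z = bform A x z + bform A y z.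
Proof. by rewrite /bform !mulmxDl addmx11E. Qed.

Lemma bformDr A x y z : bform A x (y + z) = bform A x y + bform A x z.
Proof. by rewrite bformC bformDl !(bformC A x). Qed.

Lemma bformZl A c x y : bform A (c *: x) y = c * bform A x y.
Proof. by rewrite /bform -!scalemxAl mxE. Qed.

Lemma bformZr A c x y : bform A x (c *: y) = c * bform A x y.
Proof. by rewrite bformC bformZl bformC. Qed.

Lemma bform0r A x : bform A x 0 = 0.
Proof. by rewrite -(scale0r 0) bformZr mul0r. Qed.

Lemma bformE A x y : bform A x y = \sum_j x 0 j * (y *m (A + A^T)) 0 j.
Proof.
rewrite /bform -mulmxA -{1}[A + A^T]trmx_polar -trmx_mul mxE.
by apply: eq_bigr => j _; rewrite mxE.
Qed.

Lemma bformxx A x : bform A x x = 2%:R * qform A x.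
Proof.
rewrite /bform /qform mulmxDr mulmxDl addmx11E bilin_trmx.
by rewrite mulr2n mulrDl mul1r.
Qed.

Lemma qformD A x y : qform A (x + y) = qform A x + qform A y + bform A x y.
Proof.
rewrite /qform /bform linearD /= mulmxDr !mulmxDl [in RHS]mulmxDr [in RHS]mulmxDl.
rewrite !addmx11E bilin_trmx; ring.
Qed.

Lemma qformZ A c x : qform A (c *: x) = c ^+ 2 * qform A x.
Proof. by rewrite /qform linearZ /= -scalemxAr -!scalemxAl mxE mxE mulrA expr2. Qed.

Lemma qform_plane A p a b s1 s2 s3 :
  qform A p = 0 -> qform A a = 0 -> qform A b = 0 ->
  qform A (s1 *: p + s2 *: a + s3 *: b) =
  s2 * s3 * bform A a b + s1 * s3 * bform A p b + s1 * s2 * bform A p a.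
Proof.
by move=> qp qa qb; rewrite !qformD !qformZ qp qa qb !bformDl !bformZl !bformZr; ring.
Qed.

Lemma bform_plane A p a b s1 s2 s3 t1 t2 t3 :
  qform A p = 0 -> qform A a = 0 -> qform A b = 0 ->
  bform A (s1 *: p + s2 *: a + s3 *: b) (t1 *: p + t2 *: a + t3 *: b) =
  (s2 * t3 + s3 * t2) * bform A a b + (s1 * t3 + s3 * t1) * bform A p b
  + (s1 * t2 + s2 * t1) * bform A p a.
Proof.
move=> qp qa qb; rewrite !bformDl !bformDr !bformZl !bformZr !bformxx qp qa qb.
by rewrite (bformC A a p) (bformC A b p) (bformC A b a); ring.
Qed.
End QuadraticForm.

Section GramMatrix.
Variables (K : fieldType) (n : nat).
Implicit Types (q : {mpoly K[n]}) (A : 'M[K]_n).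

Definition rv (x : 'I_n -> K) : 'rV[K]_n := \row_j x j.

Definition gram_of q A := (forall x, q.@[x] = qform A (rv x)) /\
  (forall x j, (mderiv j q).@[x] = (rv x *m (A + A^T)) 0 j).

Lemma gram_of0 : gram_of 0 0.
Proof.
split=> [x|x j]; first by rewrite meval0 /qform mulmx0 mul0mx mxE.
by rewrite mderiv0 meval0 trmx0 addr0 mulmx0 mxE.
Qed.

Lemma gram_ofD p q A B : gram_of p A -> gram_of q B -> gram_of (p + q) (A + B).
Proof.
move=> [pA dpA] [qB dqB]; split=> [x|x j].
  by rewrite mevalD pA qB /qform mulmxDr mulmxDl addmx11E.
by rewrite mderivD mevalD dpA dqB [(A + B)^T]linearD /= addrACA [in RHS]mulmxDr [RHS]mxE.
Qed.

Lemma gram_ofZ c q A : gram_of q A -> gram_of (c *: q) (c *: A).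
Proof.
move=> [qA dqA]; split=> [x|x j].
  by rewrite mevalZ qA /qform -scalemxAr -scalemxAl [RHS]mxE.
by rewrite mderivZ mevalZ dqA linearZ /= -scalerDr -scalemxAr [RHS]mxE.
Qed.

Lemma mderivX_meval x (i j : 'I_n) : (mderiv j ('X_i : {mpoly K[n]})).@[x] = (i == j)%:R.
Proof.
rewrite mderivX mevalZ mnm1E; case: eqP => [->|_]; last by rewrite mul0r.
by rewrite -{1}[U_(j)%MM]add0m addmK mpolyX0 meval1 mulr1.
Qed.

Lemma gram_ofXX (i l : 'I_n) : gram_of ('X_i * 'X_l) (delta_mx i l).
Proof.
have rvE x (M : 'M[K]_n) j : (rv x *m M) 0 j = \sum_a x a * M a j.
  by rewrite mxE; apply: eq_bigr => a _; rewrite mxE.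
have sum_delta (F : 'I_n -> K) (b : 'I_n) : \sum_a F a * (a == b)%:R = F b.
  by rewrite (bigD1 b) //= eqxx mulr1 big1 ?addr0 // => a /negbTE ->; rewrite mulr0.
split=> [x|x j].
  rewrite mevalM !mevalXU /qform mxE (bigD1 l) //= big1 => [|a /negbTE la].
    rewrite addr0 rvE (bigD1 i) //= big1 => [|a /negbTE ia]; last by rewrite mxE ia mulr0.
    by rewrite addr0 !mxE !eqxx mulr1.
  by rewrite !mxE big1 ?mul0r // => b _; rewrite !mxE la andbF mulr0.
rewrite mderivM mevalD !mevalM !mderivX_meval !mevalXU rvE.
under eq_bigr => a _ do rewrite !mxE -!mulnb !natrM mulrDr (mulrC (j == i)%:R) !mulrA.
rewrite big_split /= -!mulr_suml !sum_delta (eq_sym j l) (eq_sym j i); ring.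
Qed.

Lemma mdeg2_mnm1D (m : 'X_{1..n}) : mdeg m = 2%N -> exists i l, m = (U_(i) + U_(l))%MM.
Proof.
move=> m2; have [i mi] : exists i, (0 < m i)%N.
  apply/existsP; apply: contraT => /existsPn m0.
  suff : mdeg m = 0%N by rewrite m2.
  rewrite mdegE; apply/eqP; rewrite sum_nat_eq0; apply/forallP => j.
  by move: (m0 j); rewrite lt0n negbK.
have im : (U_(i) <= m)%MM by apply/mnm_lepP => j; rewrite mnm1E; case: eqP => [<-|].
have /mdeg1P [l ml] : mdeg (m - U_(i))%MM == 1%N.
  by rewrite -(eqn_add2r (mdeg U_(i))) -mdegD submK // m2 mdeg1.
by exists i, l; rewrite -(submK im) (eqP ml) addmC.
Qed.

Lemma dhomog2_gram q : q \is 2.-homog -> exists A, gram_of q A.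
Proof.
move=> q2; rewrite [q]mpolyE.
have : all (fun m => mdeg m == 2%N) (msupp q).
  by apply/allP => m qm; apply/eqP; apply: (dhomog_mf q2).
elim: (msupp q) => [|m s IH] /=; first by rewrite big_nil; exists 0; exact: gram_of0.
move=> /andP [/eqP /mdeg2_mnm1D [i [l ->]] /IH [A sA]].
rewrite big_cons mpolyXD; exists (q@_(U_(i) + U_(l)) *: delta_mx i l + A).
exact/gram_ofD/sA/gram_ofZ/gram_ofXX.
Qed.
End GramMatrix.

Section RowSpaces.
Variable K : fieldType.

Lemma row_ebase_sub m n (V : 'M[K]_(m, n)) (i : 'I_n) :
  (i < \rank V)%N -> (row i (row_ebase V) <= V)%MS.
Proof.
move=> iV; have im : (i < m)%N := leq_trans iV (rank_leq_row V).
have -> : row i (row_ebase V) = row (Ordinal im) (pid_mx (\rank V) *m row_ebase V).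
  apply/rowP => j; rewrite !mxE (bigD1 i) //= big1 => [|l /negbTE il].
    by rewrite !mxE eqxx /= iV mul1r addr0.
  by rewrite !mxE /=; case: eqP => [/val_inj li|_]; [rewrite li eqxx in il|rewrite mul0r].
have -> : pid_mx (\rank V) *m row_ebase V = invmx (col_ebase V) *m V.
  by rewrite -[X in _ = _ *m X](mulmx_ebase V) -mulmxA mulKmx // col_ebase_unit.
by rewrite row_mul submxMl.
Qed.

Lemma rank_ltn_of_det0 m n (J : 'M[K]_(m, n)) (M : 'M[K]_m) :
  (J^T <= M^T)%MS -> \det M = 0 -> (\rank J < m)%N.
Proof.
move=> JM detM; rewrite -mxrank_tr (leq_ltn_trans (mxrankS JM)) // mxrank_tr.
rewrite ltn_neqAle rank_leq_row andbT; apply/negP => rkM.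
have : M \in unitmx by rewrite -row_free_unit.
by rewrite unitmxE detM unitr0.
Qed.

Lemma separating_functional m n (V : 'M[K]_(m, n)) (x : 'rV[K]_n) :
  ~~ (x <= V)%MS -> exists l : 'cV[K]_n, V *m l = 0 /\ (x *m l) 0 0 != 0.
Proof.
rewrite submxE => /rV0Pn [j xj]; exists (col j (cokermx V)).
have mul_col p (B : 'M[K]_(p, n)) : B *m col j (cokermx V) = col j (B *m cokermx V).
  by apply/matrixP => k l; rewrite !mxE; apply: eq_bigr => h _; rewrite !mxE.
rewrite !mul_col mulmx_coker [(col j _) 0 0]mxE; split=> //.
by apply/matrixP => k l; rewrite !mxE.
Qed.

Lemma sub_rowsP r n (v : 'I_r -> 'rV[K]_n) (w : 'rV[K]_n) :
  reflect (exists c : 'I_r -> K, w = \sum_k c k *: v k) (w <= \matrix_k v k)%MS.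
Proof.
have mulE (c : 'rV_r) : c *m \matrix_k v k = \sum_k c 0 k *: v k.
  by rewrite mulmx_sum_row; apply: eq_bigr => k _; rewrite rowK.
apply: (iffP submxP) => [[c ->]|[c ->]]; first by exists (fun k => c 0 k).
by exists (\row_k c k); rewrite mulE; apply: eq_bigr => k _; rewrite mxE.
Qed.

Lemma row_free_rows r n (v : 'I_r -> 'rV[K]_n) :
  (forall c : 'I_r -> K, \sum_k c k *: v k = 0 -> forall k, c k = 0) ->
  row_free (\matrix_k v k).
Proof.
move=> vfree; apply: inj_row_free => c; rewrite mulmx_sum_row => c0.
apply/rowP => k; rewrite mxE (vfree (fun k => c 0 k)) //.
by rewrite -[RHS]c0; apply: eq_bigr => l _; rewrite rowK.
Qed.

Definition span2 n (a b : 'rV[K]_n) := \matrix_(k < 2) [:: a; b]`_k.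
Definition span3 n (a b c : 'rV[K]_n) := \matrix_(k < 3) [:: a; b; c]`_k.

Lemma row_free_span2 n (a b : 'rV[K]_n) :
  (forall s t, s *: a + t *: b = 0 -> s = 0 /\ t = 0) -> row_free (span2 a b).
Proof.
move=> ab_free; apply: row_free_rows => c.
rewrite !big_ord_recl big_ord0 addr0 /= => /ab_free [c0 c1].
by case=> [[|[|//]] ?]; [rewrite -c0|rewrite -c1]; congr c; apply: val_inj.
Qed.

Lemma row_free_span3 n (a b c : 'rV[K]_n) :
  (forall s1 s2 s3, s1 *: a + s2 *: b + s3 *: c = 0 -> [/\ s1 = 0, s2 = 0 & s3 = 0]) ->
  row_free (span3 a b c).
Proof.
move=> abc_free; apply: row_free_rows => d.
rewrite !big_ord_recl big_ord0 addr0 addrA /= => /abc_free [d0 d1 d2].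
by case=> [[|[|[|//]]] ?]; [rewrite -d0|rewrite -d1|rewrite -d2]; congr d; apply: val_inj.
Qed.

Lemma sub_span2 n (a b w : 'rV[K]_n) :
  (w <= span2 a b)%MS -> exists s t, w = s *: a + t *: b.
Proof.
by move/sub_rowsP => [c ->]; exists (c ord0), (c (lift ord0 ord0));
  rewrite !big_ord_recl big_ord0 addr0.
Qed.

Lemma sub_span3P n (a b c w : 'rV[K]_n) :
  reflect (exists s1 s2 s3, w = s1 *: a + s2 *: b + s3 *: c) (w <= span3 a b c)%MS.
Proof.
apply: (iffP (sub_rowsP _ _)) => [[d ->]|[s1 [s2 [s3 ->]]]].
  exists (d ord0), (d (lift ord0 ord0)), (d (lift ord0 (lift ord0 ord0))).
  by rewrite !big_ord_recl big_ord0 addr0 addrA.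
exists [ffun k : 'I_3 => [:: s1; s2; s3]`_k].
by rewrite !big_ord_recl big_ord0 addr0 addrA !ffunE.
Qed.

Lemma span3C23 n (x y z v : 'rV[K]_n) : (v <= span3 x y z)%MS = (v <= span3 x z y)%MS.
Proof.
by apply/sub_span3P/sub_span3P => [] [s1 [s2 [s3 ->]]];
  exists s1, s3, s2; rewrite -!addrA [_ *: y + _]addrC.
Qed.
End RowSpaces.

Lemma det_affine_poly (R : comNzRingType) m n (C : 'M[R]_m)
    (D : 'I_m -> 'I_m -> 'I_n -> R) (x : R -> 'rV[R]_n) :
  (forall j, exists g : {poly R}, forall s, x s 0 j = g.[s]) ->
  exists g : {poly R}, forall s,
    \det (\matrix_(k, l) (C k l + \sum_j x s 0 j * D k l j)) = g.[s].
Proof.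
move=> /fin_all_exists [X xX].
exists (\det (\matrix_(k, l) ((C k l)%:P + \sum_j X j * (D k l j)%:P))) => s.
rewrite -[RHS]/(horner_eval s _) -det_map_mx; congr (\det _); apply/matrixP => k l.
rewrite !mxE /= /horner_eval hornerD hornerC horner_sum; congr (_ + _).
by apply: eq_bigr => j _; rewrite hornerM hornerC xX.
Qed.

Section BinaryForms.
Variable K : closedFieldType.

Lemma binary_form_zero (F : K -> K -> K) (d : nat) (c : K) :
  (exists g : {poly K}, forall s, F s 1 = g.[s]) ->
  (exists h : {poly K}, forall t, F 1 t = h.[t]) ->
  (forall l s t, F (l * s) (l * t) = l ^+ d * F s t) ->
  c != 0 -> c ^+ d != 1 -> exists s t, ((s != 0) || (t != 0)) /\ F s t = 0.
Proof.
move=> [g Fg] [h Fh] Fhom c0 cd.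
have [g1|/closed_rootP [s gs]] := eqVneq (size g) 1%N; last first.
  by exists s, 1; rewrite oner_neq0 orbT Fg; split=> //; apply/eqP.
have [h1|/closed_rootP [t ht]] := eqVneq (size h) 1%N; last first.
  by exists 1, t; rewrite oner_neq0 Fh; split=> //; apply/eqP.
(* Both dehomogenisations are constant, so homogeneity at c gives
   F(1,1) = c^d F(1,1). *)
exists 1, 1; rewrite oner_neq0; split=> //.
have Fc1 : F c 1 = F 1 1 by rewrite !Fg [g]size1_polyC ?g1 // !hornerC.
have F1c : F 1 c^-1 = F 1 1 by rewrite !Fh [h]size1_polyC ?h1 // !hornerC.
have : F 1 1 = c ^+ d * F 1 1 by rewrite -{1}Fc1 -F1c -Fhom mulr1 mulfV.
move/eqP; rewrite -subr_eq0 -{1}[F 1 1]mul1r -mulrBl mulf_eq0 subr_eq0 eq_sym.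
by rewrite (negbTE cd) => /eqP.
Qed.

End BinaryForms.

Section PolarJacobian.
Variables (K : fieldType) (m n : nat) (A : 'I_m -> 'M[K]_n).

Definition polar_jacobian (x : 'rV[K]_n) : 'M[K]_(m, n) :=
  \matrix_(k, j) (x *m (A k + (A k)^T)) 0 j.

Lemma polar_jacobian_frame x (U : 'M[K]_n) k i :
  (polar_jacobian x *m U^T) k i = bform (A k) x (row i U).
Proof. by rewrite /bform !mxE; apply: eq_bigr => j _; rewrite !mxE. Qed.
End PolarJacobian.

Section BaseLocus.
Variables (K : closedFieldType) (A : 'I_3 -> 'M[K]_5).
Implicit Types (x : 'rV[K]_5).

(* The 3 x 3 block of the Jacobian, in a basis adapted to a linear space on
   the base locus, along the complementary basis vectors [u]; [C] adds a
   constant column. *)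
Definition frame_mx (C : 'M[K]_3) (u : 'I_3 -> 'rV[K]_5) x : 'M[K]_3 :=
  \matrix_(k, l) (C k l + bform (A k) x (u l)).

Lemma frame_mx_poly C u (x : K -> 'rV[K]_5) :
  (forall j, exists g : {poly K}, forall s, x s 0 j = g.[s]) ->
  exists g : {poly K}, forall s, \det (frame_mx C u (x s)) = g.[s].
Proof.
move=> /(det_affine_poly C (fun k l j => (u l *m (A k + (A k)^T)) 0 j)) [g xg].
by exists g => s; rewrite -xg; congr (\det _); apply/matrixP => k l; rewrite !mxE bformE.
Qed.

Hypothesis smooth : forall x, x != 0 -> (forall k, qform (A k) x = 0) ->
  \rank (polar_jacobian A x) = 3%N.

Lemma singular_frame_absurd x (U : 'M[K]_5) (M : 'M[K]_3) :
  x != 0 -> (forall k, qform (A k) x = 0) -> U \in unitmx -> \det M = 0 ->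
  (forall i, exists v : 'rV[K]_3, forall k,
     bform (A k) x (row i U) = \sum_l v 0 l * M k l) ->
  False.
Proof.
move=> x0 qx U1 detM cols.
have : (\rank (polar_jacobian A x *m U^T) < 3)%N.
  apply: rank_ltn_of_det0 detM; apply/row_subP => i; have [v vM] := cols i.
  have -> : row i (polar_jacobian A x *m U^T)^T = v *m M^T.
    apply/rowP => k; rewrite [LHS]mxE [LHS]mxE polar_jacobian_frame vM [RHS]mxE.
    by apply: eq_bigr => l _; rewrite mxE.
  exact: submxMl.
by rewrite mxrankMfree ?row_free_unit ?unitmx_tr // smooth.
Qed.

Hypothesis two_neq0 : (2%:R : K) != 0.

Lemma no_line_in_base_locus (a b : 'rV[K]_5) :
  (forall s t, s *: a + t *: b = 0 -> s = 0 /\ t = 0) ->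
  (forall k, qform (A k) a = 0) -> (forall k, qform (A k) b = 0) ->
  (forall k, bform (A k) a b = 0) -> False.
Proof.
move=> ab_free qa qb qab.
have rkV : \rank (span2 a b) = 2%N by apply/eqP; apply: row_free_span2.
pose U := row_ebase (span2 a b); pose u (l : 'I_3) := row (rshift 2 l) U.
pose F s t := \det (frame_mx 0 u (s *: a + t *: b)).
have [s [t [st0 Fst]]] : exists s t, ((s != 0) || (t != 0)) /\ F s t = 0.
  apply: (@binary_form_zero _ F 3 (-1)).
  - apply: frame_mx_poly => j; exists (a 0 j *: 'X + (b 0 j)%:P) => s.
    by rewrite !mxE !hornerE; ring.
  - apply: frame_mx_poly => j; exists ((a 0 j)%:P + b 0 j *: 'X) => t.
    by rewrite !mxE !hornerE; ring.
  - move=> l s t; rewrite /F -!scalerA -scalerDr -detZ; congr (\det _).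
    by apply/matrixP => k m; rewrite !mxE !add0r bformZl.
  - by rewrite oppr_eq0 oner_neq0.
  - rewrite -signr_odd expr1; apply: contraNneq two_neq0 => m1.
    by rewrite mulr2n -{2}m1 addrN.
pose x := s *: a + t *: b.
have x0 : x != 0.
  by apply: contraTneq st0 => /ab_free [-> ->]; rewrite eqxx.
have bxa k : bform (A k) x a = 0.
  by rewrite bformDl !bformZl bformxx qa (bformC (A k)) qab !mulr0 addr0.
have bxb k : bform (A k) x b = 0.
  by rewrite bformDl !bformZl bformxx qb qab !mulr0 addr0.
have qx k : qform (A k) x = 0.
  by rewrite qformD !qformZ bformZl bformZr qa qb qab !mulr0 !addr0.
apply: (singular_frame_absurd x0 qx (row_ebase_unit (span2 a b)) Fst) => i.
case: (splitP (i : 'I_(2 + 3))) => [j ij|l il].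
  exists 0 => k; rewrite big1 => [|l _]; last by rewrite mxE mul0r.
  have iV : (i < \rank (span2 a b))%N by rewrite rkV ij ltn_ord.
  have /sub_span2 [c [d ->]] : (row i U <= span2 a b)%MS := row_ebase_sub iV.
  by rewrite bformDr !bformZr bxa bxb !mulr0 addr0.
exists (\row_m (m == l)%:R) => k.
rewrite (bigD1 l) //= big1 => [|m /negbTE ml]; last by rewrite mxE ml mul0r.
by rewrite !mxE eqxx mul1r add0r addr0 /u; congr (bform _ _ (row _ _)); apply: val_inj.
Qed.

Hypothesis fifteen_neq0 : (15%:R : K) != 0.

Lemma no_conic_in_base_locus (p a b : 'rV[K]_5) (alpha beta gamma : K) :
  (forall s1 s2 s3, s1 *: p + s2 *: a + s3 *: b = 0 -> [/\ s1 = 0, s2 = 0 & s3 = 0]) ->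
  (forall k, qform (A k) p = 0) -> (forall k, qform (A k) a = 0) ->
  (forall k, qform (A k) b = 0) ->
  alpha != 0 -> beta != 0 -> gamma != 0 ->
  (forall k, alpha * bform (A k) p b = beta * bform (A k) a b) ->
  (forall k, alpha * bform (A k) p a = gamma * bform (A k) a b) -> False.
Proof.
move=> pab_free qp qa qb al0 be0 ga0 bpb bpa.
pose kap k := bform (A k) a b / alpha.
have kap_ab k : bform (A k) a b = kap k * alpha by rewrite mulfVK.
have kap_pb k : bform (A k) p b = kap k * beta.
  by apply: (mulfI al0); rewrite bpb kap_ab; ring.
have kap_pa k : bform (A k) p a = kap k * gamma.
  by apply: (mulfI al0); rewrite bpa kap_ab; ring.
(* [X] parametrises the conic alpha x2 x3 + beta x1 x3 + gamma x1 x2 = 0 in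
   the coordinates (p, a, b), on which every quadric vanishes. *)
pose w s t := alpha * s + beta * t.
pose X s t := (- (t * w s t)) *: p + (- (s * w s t)) *: a + (gamma * s * t) *: b.
have qX s t k : qform (A k) (X s t) = 0.
  by rewrite qform_plane // kap_ab kap_pb kap_pa /w; ring.
have rkV : \rank (span3 p a b) = 3%N by apply/eqP; apply: row_free_span3.
pose U := row_ebase (span3 p a b).
pose u (l : 'I_3) := if unlift ord0 l is Some l' then row (rshift 3 l') U else 0.
pose C : 'M[K]_3 := \matrix_(k, l) (if l == ord0 then kap k else 0).
pose F s t := \det (frame_mx C u (X s t)).
have frameZ c x : \det (frame_mx C u (c *: x)) = c ^+ 2 * \det (frame_mx C u x).
  have -> : frame_mx C u (c *: x) =
      frame_mx C u x *m diag_mx (\row_l (if l == ord0 then 1 else c)).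
    apply/matrixP => k l; rewrite mul_mx_diag !mxE /u.
    case: unliftP => [l' ->|->]; last by rewrite eqxx !bform0r mulr1.
    by rewrite eq_sym (negbTE (neq_lift _ _)) bformZl !add0r mulrC.
  by rewrite det_mulmx det_diag !big_ord_recl big_ord0 !mxE /=; ring.
have [s [t [st0 Fst]]] : exists s t, ((s != 0) || (t != 0)) /\ F s t = 0.
  (* F has degree 4 and 2^4 - 1 = 15 is a unit. *)
  apply: (@binary_form_zero _ F 4 2%:R).
  - apply: frame_mx_poly => j.
    exists (- (alpha *: 'X + beta%:P) * (p 0 j)%:P
      - 'X * (alpha *: 'X + beta%:P) * (a 0 j)%:P + gamma *: 'X * (b 0 j)%:P) => s.
    by rewrite !mxE !hornerE /w; ring.
  - apply: frame_mx_poly => j.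
    exists (- 'X * (alpha%:P + beta *: 'X) * (p 0 j)%:P
      - (alpha%:P + beta *: 'X) * (a 0 j)%:P + gamma *: 'X * (b 0 j)%:P) => t.
    by rewrite !mxE !hornerE /w; ring.
  - move=> l s t; rewrite /F; have -> : X (l * s) (l * t) = l ^+ 2 *: X s t.
      by rewrite /X /w !scalerDr !scalerA; congr (_ *: _ + _ *: _ + _ *: _); ring.
    by rewrite frameZ -exprM.
  - exact: two_neq0.
  - apply: contraNneq fifteen_neq0 => e.
    by rewrite (_ : 15%N = 2 ^ 4 - 1)%N // natrB // natrX e subrr.
pose x := X s t.
have x0 : x != 0.
  apply: contraTneq st0 => /pab_free [e1 e2 /eqP e3]; rewrite negb_or !negbK.
  move: e3; rewrite !mulf_eq0 (negbTE ga0) /= => /orP [] /eqP z.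
    move/eqP: e1; rewrite /w z mulr0 add0r oppr_eq0 !mulf_eq0 (negbTE be0) orbb.
    by move=> ->; rewrite eqxx.
  move/eqP: e2; rewrite /w z mulr0 addr0 oppr_eq0 !mulf_eq0 (negbTE al0) orbb.
  by move=> ->; rewrite eqxx.
apply: (singular_frame_absurd x0 (qX s t) (row_ebase_unit (span3 p a b)) Fst) => i.
case: (splitP (i : 'I_(3 + 2))) => [j ij|l il].
  have iV : (i < \rank (span3 p a b))%N by rewrite rkV ij ltn_ord.
  have /sub_span3P [c1 [c2 [c3 ->]]] : (row i U <= span3 p a b)%MS := row_ebase_sub iV.
  pose g := (- (s * w s t) * c3 + gamma * s * t * c2) * alpha
    + (- (t * w s t) * c3 + gamma * s * t * c1) * beta
    + (- (t * w s t) * c2 + - (s * w s t) * c1) * gamma.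
  exists (\row_l (if l == ord0 then g else 0)) => k.
  rewrite /x /X bform_plane // kap_ab kap_pb kap_pa.
  by rewrite !big_ord_recl big_ord0 !mxE /= /u unlift_none bform0r /g; ring.
exists (\row_m (m == lift ord0 l)%:R) => k.
rewrite (bigD1 (lift ord0 l)) //= big1 => [|m /negbTE ml]; last by rewrite mxE ml mul0r.
rewrite !mxE eqxx eq_sym (negbTE (neq_lift _ _)) /u liftK mul1r add0r addr0.
by congr (bform _ _ (row _ _)); apply: val_inj.
Qed.
End BaseLocus.

(* (al, be, ga) is orthogonal to (c2 c3, c1 c3, c1 c2) and (d2 d3, d1 d3, d1 d2),
   hence parallel to their cross product. *)
Lemma conic_pencil_cross (R : comPzRingType) (c1 c2 c3 d1 d2 d3 al be ga : R) :
  c2 * c3 * al + c1 * c3 * be + c1 * c2 * ga = 0 ->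
  d2 * d3 * al + d1 * d3 * be + d1 * d2 * ga = 0 ->
  c1 * d1 * (c3 * d2 - c2 * d3) * be = c2 * d2 * (c1 * d3 - c3 * d1) * al /\
  c1 * d1 * (c3 * d2 - c2 * d3) * ga = c3 * d3 * (c2 * d1 - c1 * d2) * al.
Proof.
move=> ec ed; split; apply/eqP; rewrite -subr_eq0; apply/eqP.
  transitivity (d1 * d2 * (c2 * c3 * al + c1 * c3 * be + c1 * c2 * ga)
    - c1 * c2 * (d2 * d3 * al + d1 * d3 * be + d1 * d2 * ga)); first ring.
  by rewrite ec ed !mulr0 subr0.
transitivity (c1 * c3 * (d2 * d3 * al + d1 * d3 * be + d1 * d2 * ga)
  - d1 * d3 * (c2 * c3 * al + c1 * c3 * be + c1 * c2 * ga)); first ring.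
by rewrite ec ed !mulr0 subr0.
Qed.

Section PointConfiguration.
Variables (K : closedFieldType) (A : 'I_3 -> 'M[K]_5).
Hypothesis smooth : forall x, x != 0 -> (forall k, qform (A k) x = 0) ->
  \rank (polar_jacobian A x) = 3%N.
Hypothesis two_neq0 : (2%:R : K) != 0.
Hypothesis fifteen_neq0 : (15%:R : K) != 0.
Variables (n : nat) (P : 'I_n -> 'rV[K]_5).
Hypothesis P_neq0 : forall i, P i != 0.
Hypothesis P_on_quadrics : forall i k, qform (A k) (P i) = 0.
Hypothesis P_distinct : forall i j, i != j -> ~ exists c, P i = c *: P j.

Ltac neq := match goal with |- is_true (?x != ?y) =>
  first [assumption | rewrite eq_sym; assumption] end.

Lemma P_free2 i j s t : i != j -> s *: P i + t *: P j = 0 -> s = 0 /\ t = 0.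
Proof.
move=> ij st0; have t0 : t = 0.
  apply/eqP/negP => /negP t0.
  apply: (P_distinct (i := j) (j := i)); first by rewrite eq_sym.
  exists (- s / t); apply: (scalerI t0); rewrite scalerA mulrC divfK // scaleNr.
  by apply/eqP; rewrite -addr_eq0 addrC st0.
split=> //; move/eqP: st0; rewrite t0 scale0r addr0 scaler_eq0 (negbTE (P_neq0 i)) orbF.
by move/eqP.
Qed.

Lemma P_free3 i j l s1 s2 s3 : i != j -> i != l -> j != l ->
  s1 *: P i + s2 *: P j + s3 *: P l = 0 -> [/\ s1 = 0, s2 = 0 & s3 = 0].
Proof.
move=> ij il jl rel.
have [s30|s30] := eqVneq s3 0.
  by move: rel; rewrite s30 scale0r addr0 => /(P_free2 ij) [-> ->].
exfalso.
have [s10|s10] := eqVneq s1 0.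
  by move: rel; rewrite s10 scale0r add0r => /(P_free2 jl) [_ /eqP]; rewrite (negbTE s30).
have [s20|s20] := eqVneq s2 0.
  by move: rel; rewrite s20 scale0r addr0 => /(P_free2 il) [_ /eqP]; rewrite (negbTE s30).
have Pl : P l = (- s1 / s3) *: P i + (- s2 / s3) *: P j.
  apply: (scalerI s30); rewrite scalerDr !scalerA ![s3 * _]mulrC !divfK // !scaleNr.
  by apply/eqP; rewrite -opprD -addr_eq0 addrC rel.
apply: (no_line_in_base_locus smooth two_neq0 (a := P i) (b := P j)) => // [s t|k].
  exact: P_free2.
move: (P_on_quadrics l k); rewrite Pl qformD !qformZ !P_on_quadrics !mulr0 !add0r.
rewrite bformZl bformZr => /eqP; rewrite !mulf_eq0 !oppr_eq0 !invr_eq0.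
by rewrite (negbTE s10) (negbTE s20) (negbTE s30) => /eqP.
Qed.

Lemma notin_span0 i : ~~ (P i <= span3 0 0 0)%MS.
Proof.
apply/negP => /sub_span3P [s1 [s2 [s3 Pi]]].
by move: (P_neq0 i); rewrite Pi !scaler0 !addr0 eqxx.
Qed.

Lemma notin_span1 i a : a != i -> ~~ (P i <= span3 (P a) 0 0)%MS.
Proof.
move=> ai; apply/negP => /sub_span3P [s1 [s2 [s3 Pi]]].
apply: (P_distinct (i := i) (j := a)); first by rewrite eq_sym.
by exists s1; rewrite Pi !scaler0 !addr0.
Qed.

Lemma notin_span2 i a b : a != i -> b != i -> a != b -> ~~ (P i <= span3 (P a) (P b) 0)%MS.
Proof.
move=> ai bi ab; apply/negP => /sub_span3P [s1 [s2 [s3 Pi]]].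
have := @P_free3 i a b 1 (- s1) (- s2); rewrite eq_sym ai eq_sym bi ab.
rewrite Pi scaler0 addr0 scale1r !scaleNr addrAC addrK subrr.
by move=> /(_ isT isT isT erefl) [/eqP]; rewrite oner_eq0.
Qed.

Lemma span3_coef_neq0 i a b c c1 c2 c3 :
  i != a -> i != b -> i != c -> a != b -> a != c -> b != c ->
  P i = c1 *: P a + c2 *: P b + c3 *: P c -> [/\ c1 != 0, c2 != 0 & c3 != 0].
Proof.
move=> ia ib ic ab ac bc Pi; split; apply/negP => /eqP c0.
- apply: (negP (@notin_span2 i b c _ _ _)); try neq.
  by apply/sub_span3P; exists c2, c3, 0; rewrite Pi c0 !scale0r add0r addr0.
- apply: (negP (@notin_span2 i a c _ _ _)); try neq.
  by apply/sub_span3P; exists c1, c3, 0; rewrite Pi c0 !scale0r !addr0.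
- apply: (negP (@notin_span2 i a b _ _ _)); try neq.
  by apply/sub_span3P; exists c1, c2, 0; rewrite Pi c0 !scale0r !addr0.
Qed.

Lemma span3_coef_cross i d a b c c1 c2 c3 d1 d2 d3 : i != d -> i != a -> d != a ->
  P i = c1 *: P a + c2 *: P b + c3 *: P c -> P d = d1 *: P a + d2 *: P b + d3 *: P c ->
  d2 != 0 -> c3 * d2 != c2 * d3.
Proof.
move=> id ia da Pi Pd d20; apply/negP => /eqP e.
have := @P_free3 i d a d2 (- c2) (- (d2 * c1 - c2 * d1)) id ia da.
have -> : d2 *: P i + - c2 *: P d + - (d2 * c1 - c2 * d1) *: P a = 0.
  rewrite Pi Pd; apply/rowP => j; rewrite !mxE.
  transitivity ((d2 * c3 - c2 * d3) * P c 0 j); first ring.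
  by rewrite mulrC in e; rewrite e subrr mul0r.
by move=> /(_ erefl) [d2_0 _ _]; rewrite d2_0 eqxx in d20.
Qed.

Lemma no_five_coplanar i a b c d :
  i != a -> i != b -> i != c -> i != d -> a != b -> a != c -> a != d ->
  b != c -> b != d -> c != d ->
  (P i <= span3 (P a) (P b) (P c))%MS -> (P d <= span3 (P a) (P b) (P c))%MS -> False.
Proof.
move=> ia ib ic id ab ac ad bc bd cd /sub_span3P [c1 [c2 [c3 Pi]]].
move=> /sub_span3P [d1 [d2 [d3 Pd]]].
have [c1_0 c2_0 c3_0] := span3_coef_neq0 ia ib ic ab ac bc Pi.
have [d1_0 d2_0 d3_0] : [/\ d1 != 0, d2 != 0 & d3 != 0].
  by apply: (span3_coef_neq0 _ _ _ ab ac bc Pd); neq.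
have e1 : c3 * d2 != c2 * d3 by apply: (span3_coef_cross id ia _ Pi Pd); neq.
have e2 : c1 * d3 != c3 * d1.
  apply: (@span3_coef_cross i d b c a c2 c3 c1 d2 d3 d1) => //; try neq.
  - by rewrite Pi; apply/rowP => j; rewrite !mxE; ring.
  - by rewrite Pd; apply/rowP => j; rewrite !mxE; ring.
have e3 : c2 * d1 != c1 * d2.
  apply: (@span3_coef_cross i d c a b c3 c1 c2 d3 d1 d2) => //; try neq.
  - by rewrite Pi; apply/rowP => j; rewrite !mxE; ring.
  - by rewrite Pd; apply/rowP => j; rewrite !mxE; ring.
have on_plane x s1 s2 s3 k : x = s1 *: P a + s2 *: P b + s3 *: P c ->
    qform (A k) x = s2 * s3 * bform (A k) (P b) (P c)
      + s1 * s3 * bform (A k) (P a) (P c) + s1 * s2 * bform (A k) (P a) (P b).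
  by move=> ->; rewrite qform_plane.
have conic k := conic_pencil_cross
  (etrans (esym (on_plane _ _ _ _ k Pi)) (P_on_quadrics i k))
  (etrans (esym (on_plane _ _ _ _ k Pd)) (P_on_quadrics d k)).
apply: (no_conic_in_base_locus smooth two_neq0 fifteen_neq0
  (alpha := c1 * d1 * (c3 * d2 - c2 * d3)) (beta := c2 * d2 * (c1 * d3 - c3 * d1))
  (gamma := c3 * d3 * (c2 * d1 - c1 * d2)) _ _ _ _ _ _ _ (fun k => proj1 (conic k))
  (fun k => proj2 (conic k))) => //; rewrite ?mulf_neq0 ?subr_eq0 //.
by move=> s1 s2 s3; apply: P_free3.
Qed.

Lemma two_planes_through_pair_absurd i a b c d :
  i != a -> i != b -> i != c -> i != d -> a != b -> a != c -> a != d ->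
  b != c -> b != d -> c != d ->
  (P i <= span3 (P a) (P b) (P c))%MS -> (P i <= span3 (P a) (P b) (P d))%MS -> False.
Proof.
move=> ia ib ic id ab ac ad bc bd cd Pi_abc Pi_abd.
apply: (no_five_coplanar ia ib ic id ab ac ad bc bd cd Pi_abc).
move: Pi_abc Pi_abd => /sub_span3P [c1 [c2 [c3 Pi]]] /sub_span3P [d1 [d2 [d3 Pi']]].
have [_ _ d3_0] := span3_coef_neq0 ia ib id ab ad bd Pi'.
apply/sub_span3P; exists ((c1 - d1) / d3), ((c2 - d2) / d3), (c3 / d3).
apply/rowP => j; move/rowP/(_ j): Pi; move/rowP/(_ j): Pi'; rewrite !mxE => e2 e1.
apply: (mulfI d3_0).
have -> : d3 * P d 0 j = P i 0 j - d1 * P a 0 j - d2 * P b 0 j by rewrite e2; ring.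
by rewrite e1; field.
Qed.

Definition separated i := exists l1 l2 : 'cV[K]_5,
  (forall j, j != i -> (P j *m l1) 0 0 * (P j *m l2) 0 0 = 0) /\
  (P i *m l1) 0 0 * (P i *m l2) 0 0 != 0.

Lemma separated_of_split i x1 y1 z1 x2 y2 z2 :
  ~~ (P i <= span3 x1 y1 z1)%MS -> ~~ (P i <= span3 x2 y2 z2)%MS ->
  (forall j, j != i -> P j \in [:: x1; y1; z1] ++ [:: x2; y2; z2]) -> separated i.
Proof.
have vanish (x y z : 'rV[K]_5) (l : 'cV[K]_5) (v : 'rV[K]_5) :
    span3 x y z *m l = 0 -> v \in [:: x; y; z] -> (v *m l) 0 0 = 0.
  move=> Vl /(nthP 0) [k k3 <-].
  by rewrite -(rowK (fun k : 'I_3 => [:: x; y; z]`_k) (Ordinal k3)) -row_mul Vl !mxE.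
move=> /separating_functional [l1 [V1 Pi1]] /separating_functional [l2 [V2 Pi2]] cover.
exists l1, l2; split=> [j /cover|]; last by rewrite mulf_neq0.
by rewrite mem_cat => /orP [/(vanish _ _ _ _ _ V1) -> | /(vanish _ _ _ _ _ V2) ->];
  rewrite ?mul0r ?mulr0.
Qed.

Lemma cover_sub (s1 s2 : seq 'rV[K]_5) i :
  (forall j, j != i -> P j \in s1) -> all (mem s2) s1 -> forall j, j != i -> P j \in s2.
Proof. by move=> cover /allP s12 j /cover /s12. Qed.

Lemma separated_of_bad_triple i a b c d e f : uniq [:: i; a; b; c; d; e; f] ->
  (forall j, j != i -> P j \in [:: P a; P b; P c; P d; P e; P f]) ->
  (P i <= span3 (P a) (P b) (P c))%MS -> separated i.
Proof.
rewrite /= !inE !negb_or -!andbA andbT; repeat (case/andP => ?); move=> ? cover bad.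
have good_ab x : x != i -> x != a -> x != b -> x != c ->
    ~~ (P i <= span3 (P a) (P b) (P x))%MS.
  move=> xi xa xb xc; apply/negP => bad'.
  by apply: (two_planes_through_pair_absurd _ _ _ _ _ _ _ _ _ _ bad bad'); neq.
have [bad_cef|good_cef] := boolP (P i <= span3 (P c) (P e) (P f))%MS; last first.
  apply: (separated_of_split (good_ab d _ _ _ _) good_cef); try neq.
  by apply: cover_sub cover _; rewrite /= !inE !eqxx ?orbT.
have [bad_cdf|good_cdf] := boolP (P i <= span3 (P c) (P d) (P f))%MS; last first.
  apply: (separated_of_split (good_ab e _ _ _ _) good_cdf); try neq.
  by apply: cover_sub cover _; rewrite /= !inE !eqxx ?orbT.
rewrite span3C23 in bad_cef; rewrite span3C23 in bad_cdf.
by case: (two_planes_through_pair_absurd _ _ _ _ _ _ _ _ _ _ bad_cef bad_cdf); neq.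
Qed.

Lemma separated_all i : (n <= 7)%N -> separated i.
Proof.
move=> n7; pose s := [seq j <- enum 'I_n | j != i].
have s_mem j : (j \in s) = (j != i) by rewrite mem_filter mem_enum andbT.
have s_uniq : uniq (i :: s) by rewrite /= s_mem eqxx filter_uniq // enum_uniq.
have s6 : (size s <= 6)%N.
  have := uniq_leq_size s_uniq (fun j _ => mem_enum _ j).
  by rewrite size_enum_ord => /leq_trans/(_ n7).
have cover j : j != i -> P j \in map P s by rewrite -s_mem => /(map_f P).
clearbody s; move: s_uniq s6 cover; clear s_mem.
case: s => [|a [|b [|c [|d [|e [|f [|g s']]]]]]] //= s_uniq _ cover;
  have := s_uniq; rewrite /= ?inE ?negb_or -?andbA ?andbT;
  repeat (case/andP => ?); try move=> ?.
- by apply: (separated_of_split (notin_span0 i) (notin_span0 i)) => j /cover.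
- apply: (separated_of_split (@notin_span1 i a _) (notin_span0 i)); try neq.
  by apply: cover_sub cover _; rewrite /= !inE !eqxx ?orbT.
- apply: (separated_of_split (@notin_span1 i a _) (@notin_span1 i b _)); try neq.
  by apply: cover_sub cover _; rewrite /= !inE !eqxx ?orbT.
- apply: (separated_of_split (@notin_span2 i a b _ _ _) (@notin_span1 i c _)); try neq.
  by apply: cover_sub cover _; rewrite /= !inE !eqxx ?orbT.
- apply: (separated_of_split (@notin_span2 i a b _ _ _) (@notin_span2 i c d _ _ _));
    try neq.
  by apply: cover_sub cover _; rewrite /= !inE !eqxx ?orbT.
- have [bad|good] := boolP (P i <= span3 (P a) (P b) (P c))%MS; last first.
    apply: (separated_of_split good (@notin_span2 i d e _ _ _)); try neq.
    by apply: cover_sub cover _; rewrite /= !inE !eqxx ?orbT.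
  have good : ~~ (P i <= span3 (P a) (P b) (P d))%MS.
    apply/negP => bad'.
    by apply: (two_planes_through_pair_absurd _ _ _ _ _ _ _ _ _ _ bad bad'); neq.
  apply: (separated_of_split good (@notin_span2 i c e _ _ _)); try neq.
  by apply: cover_sub cover _; rewrite /= !inE !eqxx ?orbT.
- have [bad|good_abc] := boolP (P i <= span3 (P a) (P b) (P c))%MS.
    exact: separated_of_bad_triple s_uniq cover bad.
  have [bad|good_def] := boolP (P i <= span3 (P d) (P e) (P f))%MS.
    apply: (@separated_of_bad_triple i d e f a b c _ _ bad).
      by rewrite /= !inE !negb_or; repeat (apply/andP; split); try neq.
    by apply: cover_sub cover _; rewrite /= !inE !eqxx ?orbT.
  apply: (separated_of_split good_abc good_def).
  by apply: cover_sub cover _; rewrite /= !inE !eqxx ?orbT.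
Qed.
End PointConfiguration.

Section Interpolation.
Variables (K : fieldType) (n : nat).

Definition linear_mpoly (l : 'cV[K]_n) : {mpoly K[n]} := \sum_j l j 0 *: 'X_j.

Lemma linear_mpoly_homog l : linear_mpoly l \is 1.-homog.
Proof. by apply: rpred_sum => j _; apply: rpredZ; rewrite dhomogX /= mdeg1. Qed.

Lemma linear_mpoly_meval l (x : 'I_n -> K) : (linear_mpoly l).@[x] = (rv x *m l) 0 0.
Proof.
rewrite raddf_sum mxE; apply: eq_bigr => j _.
by rewrite -[LHS]/((l j 0 *: 'X_j).@[x]) mevalZ mevalXU mxE mulrC.
Qed.
End Interpolation.

Lemma independent_of_separating_quadrics (K : fieldType) m (p : 'I_m -> 'I_5 -> K) :
  (forall i, exists g : {mpoly K[5]},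
     [/\ g \is 2.-homog, forall j, j != i -> g.@[p j] = 0 & g.@[p i] != 0]) ->
  independent_on_quadrics p.
Proof.
move=> /fin_all_exists [g gP] c.
exists (\sum_i (c i / (g i).@[p i]) *: g i); split.
  by apply: rpred_sum => i _; apply: rpredZ; case: (gP i).
move=> j; rewrite raddf_sum (bigD1 j) //= big1 => [|i ij].
  by have [_ _ gj] := gP j; rewrite addr0 mevalZ divfK.
by have [_ gi _] := gP i; rewrite mevalZ (gi j) ?mulr0 // eq_sym.
Qed.

Lemma smooth_polar_jacobian (K : fieldType) (Q : 'I_3 -> {mpoly K[5]})
    (A : 'I_3 -> 'M[K]_5) :
  smooth_CI_of_quadrics Q -> (forall k, gram_of (Q k) (A k)) ->
  forall x, x != 0 -> (forall k, qform (A k) x = 0) -> \rank (polar_jacobian A x) = 3%N.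
Proof.
move=> [_ Qsmooth] QA x x0 qx; pose xf j := x 0 j.
have rvx : rv xf = x by apply/rowP => j; rewrite mxE.
suff -> : polar_jacobian A x = jacobian Q xf.
  apply: Qsmooth; split => [|k]; last by rewrite (proj1 (QA k)) rvx.
  by case/rV0Pn: x0 => j xj; exists j.
by apply/matrixP => k j; rewrite [LHS]mxE [RHS]mxE (proj2 (QA k)) rvx.
Qed.

Unset Implicit Arguments.
Theorem corollary2p1 (K : closedFieldType)
  (hchar2 : ~~ (2%N \in [pchar K])) (hchar3 : ~~ (3%N \in [pchar K]))
  (hchar5 : ~~ (5%N \in [pchar K]))
  (Q : 'I_3 -> {mpoly K[5]}) (hQ : smooth_CI_of_quadrics Q)
  (n : nat) (hn : (n <= 7)%N) (p : 'I_n -> 'I_5 -> K)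
  (hp : forall i, on_CI Q (p i))
  (hdist : forall i j, i != j -> ~ proj_eq (p i) (p j)) :
  independent_on_quadrics p.
Proof.
have [A QA] := fin_all_exists (fun k => dhomog2_gram (proj1 hQ k)).
have two_neq0 : (2%:R : K) != 0 by rewrite natf_neq0_pchar pnatE.
have fifteen_neq0 : (15%:R : K) != 0.
  by rewrite natf_neq0_pchar (_ : 15 = 3 * 5)%N // pnatM !pnatE //; apply/andP.
pose P i := rv (p i).
have P_neq0 i : P i != 0.
  by have [[j pj] _] := hp i; apply/rV0Pn; exists j; rewrite mxE.
have P_on i k : qform (A k) (P i) = 0 by rewrite -(proj1 (QA k)); case: (hp i) => _ ->.
have P_distinct i j : i != j -> ~ exists c, P i = c *: P j.
  move=> ij [c Pij]; apply: (hdist i j ij); exists c => l.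
  by have := congr1 (fun v : 'rV_5 => v 0 l) Pij; rewrite !mxE.
apply: independent_of_separating_quadrics => i.
have [l1 [l2 [vanish sep]]] := separated_all (smooth_polar_jacobian hQ QA) two_neq0
  fifteen_neq0 P_neq0 P_on P_distinct i hn.
exists (linear_mpoly l1 * linear_mpoly l2); split.
- exact: dhomogM (linear_mpoly_homog l1) (linear_mpoly_homog l2).
- by move=> j ji; rewrite mevalM !linear_mpoly_meval vanish.
- by rewrite mevalM !linear_mpoly_meval.
Qed.
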